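(* Let $S$ be a finite set, $\Delta$ a nonnegative integer, and $w:S\to\{-\Delta,\dots,\Delta\}$ integer weights with $|w(S)|=\mu$, where $w(S)=\sum_{s\in S}w(s)$. Let $S^+=\{s\in S: w(s)\ge 0\}$. Let $S_1,\dots,S_\ell$ be a partitioning of $S$ into subsets. Then there exists an index $i$ such that \[ |S^+\cap S_i|\ge\frac{|S|-\mu}{\ell\cdot(\Delta+1)}. \] *)

From mathcomp Require Import all_boot all_order all_algebra.
Set Implicit Arguments. Unset Strict Implicit. Unset Printing Implicit Defensive.
Import Order.TTheory GRing.Theory Num.Theory.

Definition pos_part (T : finType) (S : {set T}) (w : T -> int) : {set T} :=
  [set s in S | (0 <= w s)%R].

From mathcomp Require Import all_boot all_order all_algebra.
From mathcomp Require Import lra.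
Import Order.TTheory GRing.Theory Num.Theory.
Local Open Scope ring_scope.

(* Each element of S^+ contributes at most Delta to w(S) and each other element
   at most -1, so -mu <= w(S) <= Delta |S^+| - (|S| - |S^+|), i.e.
   |S| - mu <= (Delta + 1) |S^+|.  As the parts cover S^+, the largest of the
   l traces S^+ :&: S_i has at least |S^+| / l elements. *)

Lemma card_bigcup_leq_sum {T : finType} {I : Type} (r : seq I) (F : I -> {set T}) :
  (#|\bigcup_(i <- r) F i| <= \sum_(i <- r) #|F i|)%N.
Proof.
elim: r => [|i r IHr]; first by rewrite !big_nil cards0.
by rewrite !big_cons (leq_trans (leq_card_setU _ _)) // leq_add2l.
Qed.

Lemma pigeonhole_cover {T I : finType} {F : I -> {set T}} {A : {set T}} :
    (0 < #|I|)%N -> A \subset \bigcup_i F i ->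
  exists i, (#|A| <= #|I| * #|A :&: F i|)%N.
Proof.
move=> I_gt0 A_sub.
have [i max_i] := bigop.eq_bigmax (fun i => #|A :&: F i|) I_gt0.
exists i; rewrite -max_i -sum_nat_const.
have sum_le_max : (\sum_i #|A :&: F i| <= \sum_(i in I) \max_j #|A :&: F j|)%N.
  by apply: leq_sum => j _; apply: leq_bigmax.
apply: leq_trans sum_le_max; apply: leq_trans (card_bigcup_leq_sum _ _).
apply/subset_leq_card/subsetP => x Ax.
have /bigcupP[j _ Fj_x] := subsetP A_sub x Ax.
by apply/bigcupP; exists j; rewrite // inE Ax.
Qed.

Lemma pos_part_sub (T : finType) (S : {set T}) (w : T -> int) :
  pos_part S w \subset S.
Proof. by apply/subsetP => s; rewrite inE => /andP[]. Qed.

Lemma card_pos_part_ge {T : finType} {S : {set T}} {Delta : nat} {w : T -> int} :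
    (forall s, s \in S -> `|w s| <= Delta%:Z) ->
  #|S|%:Z - `|\sum_(s in S) w s| <= (Delta%:Z + 1) * #|pos_part S w|%:Z.
Proof.
move=> w_le; set P := pos_part S w.
have SIP : S :&: P = P by apply/setIidPr/pos_part_sub.
have sumP : \sum_(s in P) w s <= Delta%:Z * #|P|%:Z.
  rewrite -[#|P|%:Z]natz mulr_natr -sumr_const.
  apply: ler_sum => s; rewrite inE => /andP[sS _].
  exact: le_trans (ler_norm _) (w_le s sS).
have sumSP : \sum_(s in S :\: P) w s <= - #|S :\: P|%:Z.
  rewrite -[#|_|%:Z]natz -mulNrn -sumr_const; apply: ler_sum => s.
  rewrite !inE negb_and -ltNge => /andP[/orP[/negP//|w_lt0] _].
  by rewrite -ltzD1 addNr.
have cardS : #|S| = (#|P| + #|S :\: P|)%N by rewrite -(cardsID P S) SIP.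
have sumS : \sum_(s in S) w s = \sum_(s in P) w s + \sum_(s in S :\: P) w s.
  by rewrite (big_setID P) SIP.
have := ler_norm (- \sum_(s in S) w s); rewrite normrN sumS cardS PoszD.
lra.
Qed.

Theorem proposition7 (T : finType) (S : {set T}) (Delta : nat) (w : T -> int)
    (mu : nat) (l : nat) (Sp : 'I_l -> {set T})
    (hw : forall s, s \in S -> `|w s| <= Delta%:Z)
    (hmu : `|\sum_(s in S) w s| = mu%:Z)
    (hl : (0 < l)%N)
    (hdisj : forall i j : 'I_l, i != j -> [disjoint Sp i & Sp j])
    (hcover : \bigcup_(i < l) Sp i = S) :
  exists i : 'I_l,
    ((#|S|%:R - mu%:R) / (l%:R * (Delta%:R + 1)) : rat)
      <= #|pos_part S w :&: Sp i|%:R.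
Proof.
set P := pos_part S w.
have P_sub : P \subset \bigcup_(i < l) Sp i by rewrite hcover pos_part_sub.
have [|i large_i] := pigeonhole_cover _ P_sub; first by rewrite card_ord.
have {}large_i : (#|P|%:R : rat) <= l%:R * #|P :&: Sp i|%:R.
  by rewrite -natrM ler_nat -[l in (_ <= l * _)%N]card_ord.
have count_P : (#|S|%:R - mu%:R : rat) <= (Delta%:R + 1) * #|P|%:R.
  have := card_pos_part_ge hw; rewrite hmu -(ler_int rat).
  by rewrite !(rmorphB, rmorphM, rmorphD, rmorph1) /= -!pmulrn.
have Delta1_gt0 : (0 : rat) < Delta%:R + 1 by rewrite ltr_wpDl.
exists i; rewrite ler_pdivrMr ?mulr_gt0 ?ltr0n //.
apply: le_trans count_P _.
rewrite mulrA [X in _ <= X]mulrC; apply: ler_wpM2l; first exact: ltW.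
by rewrite mulrC.
Qed.
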